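(* Let $f\in\mathbb{R}[X_1,\dots,X_n]$ be a non-constant polynomial of degree $2d$ such that $|\alpha|<2d$ for each $\alpha\in\Delta$ and $f_{2d,i}>0$ for $i=1,\dots,n$. Let $t:=|\Delta|$. Then $$f_{gp}\ \geq\ r_{dmt}:=f_0-\sum_{\alpha\in\Delta}(2d-|\alpha|)\left[\left(\frac{f_{\alpha}}{2d}\right)^{2d}t^{|\alpha|}\alpha^{\alpha}f_{2d}^{-\alpha}\right]^{\frac{1}{2d-|\alpha|}}.$$
   Context: $\mathbb{N}=\{0,1,2,\dots\}$. For $\alpha\in\mathbb{N}^n$ write $\underline{X}^\alpha=X_1^{\alpha_1}\cdots X_n^{\alpha_n}$, $|\alpha|=\sum_i\alpha_i$, and for $a\in\mathbb{R}^n$, $a^{\alpha}=\prod_i a_i^{\alpha_i}$ with $0^0=1$ (so $\alpha^\alpha=\prod_i\alpha_i^{\alpha_i}$). For $f=\sum_\alpha f_\alpha\underline{X}^\alpha$ of degree $2d$: $f_0$ constant term, $f_{2d,i}$ coefficient of $X_i^{2d}$, $f_{2d}^{-\alpha}:=\prod_{i=1}^n f_{2d,i}^{-\alpha_i}$, $\Omega=\{\alpha: f_\alpha\ne0\}\setminus\{\underline{0},2d\epsilon_1,\dots,2d\epsilon_n\}$, $\Delta=\{\alpha\in\Omega:\ f_\alpha<0\text{ or }\alpha_i\text{ odd for some }i\}$, $\Delta^{<2d}=\{\alpha\in\Delta:|\alpha|<2d\}$. $f_{gp}$ is the supremum (with $\sup\emptyset=-\infty$) of all $r\in\mathbb{R}$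 for which there exist reals $a_{\alpha,i}\ge0$ ($\alpha\in\Delta$, $i=1,\dots,n$), $a_{\alpha,i}=0$ iff $\alpha_i=0$, with, for $a_\alpha=(a_{\alpha,1},\dots,a_{\alpha,n})$: (1) $(2d)^{2d}a_\alpha^\alpha=|f_\alpha|^{2d}\alpha^\alpha$ for $\alpha\in\Delta$, $|\alpha|=2d$; (2) $f_{2d,i}\ge\sum_{\alpha\in\Delta}a_{\alpha,i}$ for all $i$; (3) $f_0-r\ge\sum_{\alpha\in\Delta^{<2d}}(2d-|\alpha|)\big[\frac{|f_\alpha|^{2d}\alpha^\alpha}{(2d)^{2d}a_\alpha^\alpha}\big]^{1/(2d-|\alpha|)}$. *)

From mathcomp Require Import all_boot all_order all_algebra.
From mathcomp Require Import mpoly.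
From mathcomp Require Import boolp classical_sets reals ereal exp.

Set Implicit Arguments.
Unset Strict Implicit.
Unset Printing Implicit Defensive.

Import Order.TTheory GRing.Theory Num.Theory.
Local Open Scope ring_scope.

Definition pure_mnm (n k : nat) (i : 'I_n) : 'X_{1..n} :=
  [multinom (if j == i then k else 0%N) | j < n].

Definition fconst (R : realType) (n : nat) (f : {mpoly R[n]}) : R :=
  f@_(@mnm0 n).

Definition ftop (R : realType) (n d : nat) (f : {mpoly R[n]}) (i : 'I_n) : R :=
  f@_(pure_mnm (2 * d)%N i).

Definition Omega (R : realType) (n d : nat) (f : {mpoly R[n]}) : seq 'X_{1..n} :=
  [seq a <- msupp f | (a != @mnm0 n) && [forall i, a != pure_mnm (2 * d)%N i]].

Definition Delta (R : realType) (n d : nat) (f : {mpoly R[n]}) : seq 'X_{1..n} :=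
  [seq a <- Omega d f | (f@_a < 0) || [exists i, odd (a i)]].

(* a^alpha = prod_i a_i^{alpha_i} (with 0^0 = 1) *)
Definition vpow (R : realType) (n : nat) (a : 'I_n -> R) (al : 'X_{1..n}) : R :=
  \prod_(i < n) a i ^+ al i.

(* alpha^alpha = prod_i alpha_i^{alpha_i} (with 0^0 = 1) *)
Definition selfpow (R : realType) (n : nat) (al : 'X_{1..n}) : R :=
  \prod_(i < n) (al i)%:R ^+ al i.

Definition fgp_set (R : realType) (n d : nat) (f : {mpoly R[n]}) : set R :=
  [set r : R | exists a : 'X_{1..n} -> 'I_n -> R,
     [/\ (forall al, al \in Delta d f -> forall i,
            0 <= a al i /\ (a al i = 0 <-> al i = 0%N)),
         (forall al, al \in Delta d f -> mdeg al = (2 * d)%N ->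
            ((2 * d)%:R ^+ (2 * d) * vpow (a al) al
             = `|f@_al| ^+ (2 * d) * selfpow R al)),
         (forall i, \sum_(al <- Delta d f) a al i <= ftop d f i) &
         (\sum_(al <- Delta d f | (mdeg al < 2 * d)%N)
            ((2 * d - mdeg al)%N)%:R *
            powR (`|f@_al| ^+ (2 * d) * selfpow R al
                  / ((2 * d)%:R ^+ (2 * d) * vpow (a al) al))
                 (((2 * d - mdeg al)%N)%:R)^-1
          <= fconst f - r)]].

(* f_gp = sup of fgp_set, with sup of the empty set = -oo *)
Definition f_gp (R : realType) (n d : nat) (f : {mpoly R[n]}) : \bar R :=
  ereal_sup [set r%:E | r in fgp_set d f].

Definition r_dmt (R : realType) (n d : nat) (f : {mpoly R[n]}) : R :=
  fconst f -
  \sum_(al <- Delta d f)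
     ((2 * d - mdeg al)%N)%:R *
     powR ((f@_al / (2 * d)%:R) ^+ (2 * d) * (size (Delta d f))%:R ^+ mdeg al
           * selfpow R al * \prod_(i < n) ftop d f i ^- al i)
          (((2 * d - mdeg al)%N)%:R)^-1.

(* Choose the weights [a_(alpha,i) := f_(2d,i) / t] on the support of each
   [alpha] in [Delta]: condition (2) holds as there are only [t] summands,
   condition (1) is vacuous since no [alpha] in [Delta] has degree [2d], and
   with these weights the right-hand side of (3) is exactly [f_0 - r_dmt]. *)

From mathcomp Require Import all_boot all_order all_algebra.
From mathcomp Require Import mpoly.
From mathcomp Require Import boolp classical_sets reals ereal exp.
From mathcomp Require Import ring.

Set Implicit Arguments.
Unset Strict Implicit.
Unset Printing Implicit Defensive.

Import Order.TTheory GRing.Theory Num.Theory.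
Local Open Scope ring_scope.

Section SupportWeights.

Variables (R : realType) (n : nat).

Definition support_weights (c : 'I_n -> R) (t : R) (al : 'X_{1..n}) (i : 'I_n) :=
  if al i == 0%N then 0 else c i / t.

Lemma vpow_support_weights (c : 'I_n -> R) (t : R) (al : 'X_{1..n}) :
  vpow (support_weights c t al) al = vpow c al / t ^+ mdeg al.
Proof.
rewrite /vpow mdegE -exprVn -prodrXr -big_split /=; apply: eq_bigr => i _.
rewrite /support_weights; case: ifP => [/eqP ->|_]; first by rewrite !expr0 mulr1.
by rewrite exprMn.
Qed.

Lemma support_weights_spec (c : 'I_n -> R) (t : R) (al : 'X_{1..n}) (i : 'I_n) :
  0 < c i -> 0 < t ->
  0 <= support_weights c t al i /\ (support_weights c t al i = 0 <-> al i = 0%N).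
Proof.
move=> c_gt0 t_gt0; rewrite /support_weights.
case: eqP => [-> //|al_ne0].
have cVt_gt0 : 0 < c i / t by rewrite divr_gt0.
by split; [exact: ltW | split => // /eqP; rewrite gt_eqF].
Qed.

Lemma sum_support_weights_le (c : 'I_n -> R) (s : seq 'X_{1..n}) (i : 'I_n) :
  0 <= c i -> \sum_(al <- s) support_weights c (size s)%:R al i <= c i.
Proof.
move=> c_ge0; set t : R := (size s)%:R.
have cVt_ge0 : 0 <= c i / t by rewrite divr_ge0 ?ler0n.
apply: (@le_trans _ _ (\sum_(al <- s) c i / t)).
  by apply: ler_sum => al _; rewrite /support_weights; case: ifP.
rewrite big_const_seq count_predT iter_addr_0 -mulr_natr -/t.
have [->|t_neq0] := eqVneq t 0; first by rewrite mulr0.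
by rewrite divfK.
Qed.

End SupportWeights.

Lemma size_gt0_of_mem (T : eqType) (x : T) (s : seq T) : x \in s -> (0 < size s)%N.
Proof. by case: s. Qed.

Lemma gp_ratio_support_weights (R : realType) (n d : nat) (al : 'X_{1..n}) (c : 'I_n -> R)
    (fa t : R) :
  (0 < d)%N -> (forall i, 0 < c i) -> 0 < t ->
  `|fa| ^+ (2 * d) * selfpow R al
    / ((2 * d)%:R ^+ (2 * d) * vpow (support_weights c t al) al)
  = (fa / (2 * d)%:R) ^+ (2 * d) * t ^+ mdeg al * selfpow R al
    * \prod_(i < n) c i ^- al i.
Proof.
move=> d_gt0 c_gt0 t_gt0.
have abs_even : `|fa| ^+ (2 * d) = fa ^+ (2 * d).
  by rewrite -normrX ger0_norm // exprM exprn_ge0 // sqr_ge0.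
have prod_neq0 : \prod_(i < n) c i ^+ al i != 0.
  by rewrite prodf_seq_neq0; apply/allP => i _; rewrite expf_neq0 // gt_eqF.
have two_d_neq0 : (2 * d)%:R ^+ (2 * d) != 0 :> R.
  by rewrite expf_neq0 // pnatr_eq0 muln_eq0 negb_or /= -lt0n d_gt0.
have tX_neq0 : t ^+ mdeg al != 0 by rewrite expf_neq0 // gt_eqF.
rewrite vpow_support_weights abs_even prodfV expr_div_n /vpow.
move: prod_neq0 two_d_neq0 tX_neq0.
set P := \prod_(i < n) _; set B := _ ^+ (2 * d); set T := t ^+ _ => P_neq0 B_neq0 T_neq0.
by field; rewrite P_neq0 B_neq0 T_neq0.
Qed.

Theorem corollary4p3 (R : realType) (n d : nat) (f : {mpoly R[n]}) :
  (0 < d)%N ->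
  msize f = (2 * d).+1 ->
  (forall al, al \in Delta d f -> (mdeg al < 2 * d)%N) ->
  (forall i : 'I_n, 0 < ftop d f i) ->
  ((r_dmt d f)%:E <= f_gp d f)%E.
Proof.
move=> d_gt0 _ deg_lt top_gt0.
apply: ereal_sup_ubound; exists (r_dmt d f) => //.
set D := Delta d f; set t : R := (size D)%:R.
have t_gt0 al : al \in D -> 0 < t by move=> /size_gt0_of_mem; rewrite ltr0n.
exists (support_weights (ftop d f) t); split.
- by move=> al alD i; apply: support_weights_spec => //; exact: t_gt0 alD.
- by move=> al /deg_lt + deg_eq; rewrite deg_eq ltnn.
- by move=> i; apply: sum_support_weights_le; exact: ltW.
- rewrite /r_dmt opprB addrC subrK -/D big_seq_cond [X in _ <= X]big_seq.
  rewrite le_eqVlt; apply/orP; left; apply/eqP.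
  apply: eq_big => [al|al /andP [alD _]].
    by case: (boolP (al \in D)) => //= /deg_lt ->.
  by congr (_ * powR _ _); apply: gp_ratio_support_weights => //; exact: t_gt0 alD.
Qed.
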